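(* The Petersen graph is uniformly vertex-transitive but is not a Cayley graph.
   Context: The Petersen graph has as vertices the $2$-element subsets of $\{1,2,3,4,5\}$, two being adjacent iff they are disjoint. A permutation $\sigma$ of $V(\Gamma)$ is identified with its permutation matrix (the $(u,v)$ entry is $1$ iff $\sigma(u)=v$); $J_n$ is the $n\times n$ all-ones matrix. A graph $\Gamma$ on $n$ vertices is uniformly vertex-transitive if there is a set of $n$ distinct automorphisms $\{\sigma_1,\ldots,\sigma_n\}\subset\operatorname{Aut}(\Gamma)$ with $\sum_i\sigma_i=J_n$. A Cayley graph $C(G,S)$, for a finite group $G$ and subset $S\subset G$, has vertex set $G$, with $a,b$ adjacent iff $a=sb$ or $b=sa$ for some $s\in S$; a graph is Cayley if it is isomorphic to some $C(G,S)$. *)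

From HB Require Import structures.
From mathcomp Require Import all_boot all_fingroup.
Set Implicit Arguments. Unset Strict Implicit. Unset Printing Implicit Defensive.

(* Vertices of the Petersen graph: 2-element subsets of a 5-element set
   ({0,..,4} = 'I_5 stands for {1,..,5}). *)
Definition pvert := {A : {set 'I_5} | #|A| == 2}.

Definition petersen_adj : rel pvert :=
  fun u v => [disjoint val u & val v].

Definition is_graph_aut (T : finType) (e : rel T) (s : {perm T}) : Prop :=
  forall u v, e (s u) (s v) = e u v.

(* Uniformly vertex-transitive: a set Sig of n = #|T| distinct automorphisms
   whose permutation matrices sum to J_n, i.e. for every entry (u,v)
   exactly one sigma in Sig satisfies sigma u = v. *)
Definition uniformly_vertex_transitive (T : finType) (e : rel T) : Prop :=
  exists Sig : {set {perm T}},
    [/\ #|Sig| = #|T|,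
        (forall s, s \in Sig -> is_graph_aut e s) &
        (forall u v, #|[set s in Sig | s u == v]| = 1)].

Definition cayley_adj (gT : finGroupType) (S : {set gT}) : rel gT :=
  fun a b => [exists s in S, (a == (s * b)%g) || (b == (s * a)%g)].

Definition is_cayley (T : finType) (e : rel T) : Prop :=
  exists (gT : finGroupType) (S : {set gT}) (f : T -> gT),
    bijective f /\ (forall u v, e u v = cayley_adj S (f u) (f v)).

(* Take the vertices to be the 2-subsets of F_5.  The ten affine maps x |-> x + i
   and x |-> 2x + i are automorphisms, and they move any pair to ten different
   pairs because a + a' <> 0 for a, a' in {1, 2}; hence every pair is sent to
   every other pair by exactly one of them.
   Conversely, if C(G, S) is the Petersen graph then |G| = 10, the connection set
   C = S :|: S^-1 has three elements, and since there are no quadrangles no two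
   elements s <> t of C with st <> 1 commute.  If C contains some x <> x^-1, it
   also contains an involution a, x has order 5 and z = x x^a commutes with a:
   either z = 1, giving the quadrangle 1, a, ax, x, or z generates <x> and a
   commutes with x.  Otherwise C consists of involutions, some product ab has
   order 5 and every edge joins the two cosets of <ab>, whereas the Petersen
   graph contains a pentagon. *)

From mathcomp Require Import all_boot all_fingroup cyclic ssralg finalg zmodp ring.
Set Implicit Arguments. Unset Strict Implicit. Unset Printing Implicit Defensive.

Lemma set2_eq (T : finType) (x y x' y' : T) : x != y -> [set x; y] = [set x'; y'] ->
  (x = x' /\ y = y') \/ (x = y' /\ y = x').
Proof.
move=> xy eq2; have := set21 x y; have := set22 x y; rewrite eq2.
move=> /set2P[] ey /set2P[] ex; rewrite ?ex ?ey ?eqxx in xy *; by [left | right].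
Qed.

Lemma disjoint_set2 (T : finType) (a b c d : T) :
  [disjoint [set a; b] & [set c; d]] = [&& a != c, a != d, b != c & b != d].
Proof.
rewrite disjoints_subset subUset !sub1set !inE.
by case: (a == c); case: (a == d); case: (b == c); case: (b == d).
Qed.

Section GraphInvariants.
Variables (T : finType) (e : rel T).

Definition loopless := forall x, ~~ e x x.

Definition quadrangle_free :=
  forall u w p q, u != w -> p != q -> e p u -> e p w -> e q u -> e q w -> False.

Definition regular (k : nat) := forall x, #|[set y | e x y]| = k.

Definition bipartite := exists c : T -> bool, forall u v, e u v -> c u != c v.

Lemma pentagon_not_bipartite v0 v1 v2 v3 v4 :
  e v0 v1 -> e v1 v2 -> e v2 v3 -> e v3 v4 -> e v4 v0 -> ~ bipartite.
Proof.
move=> e01 e12 e23 e34 e40 [c col].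
move: (col _ _ e01) (col _ _ e12) (col _ _ e23) (col _ _ e34) (col _ _ e40).
by case: (c v0); case: (c v1); case: (c v2); case: (c v3); case: (c v4).
Qed.

Lemma semiregular_auts_uvt (I : finType) (sigma : I -> {perm T}) :
    #|I| = #|T| -> (forall i, is_graph_aut e (sigma i)) ->
    (forall u i j, sigma i u = sigma j u -> i = j) ->
  uniformly_vertex_transitive e.
Proof.
move=> cardI aut semireg.
have sigma_inj : injective sigma.
  move=> i j eq_ij; have /card_gt0P[u _] : 0 < #|T|.
    by rewrite -cardI; apply/card_gt0P; exists i.
  by apply: (semireg u); rewrite eq_ij.
exists [set sigma i | i : I]; split=> [|s /imsetP[i _ ->]|u v].
- by rewrite card_imset.
- exact: aut.
- have orbit_inj : injective (sigma^~ u) := semireg u.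
  have [i ->] := codomP (inj_card_onto orbit_inj (eq_leq (esym cardI)) v).
  rewrite -(cards1 (sigma i)); apply: eq_card => s; rewrite !inE.
  apply/andP/eqP => [[/imsetP[j _ ->] /eqP /orbit_inj -> //] | ->].
  by rewrite imset_f.
Qed.

End GraphInvariants.

Section Isomorphism.
Variables (T T' : finType) (e : rel T) (e' : rel T') (f : T -> T') (g : T' -> T).
Hypotheses (fK : cancel f g) (gK : cancel g f) (f_adj : forall u v, e u v = e' (f u) (f v)).

Let g_adj x y : e' x y = e (g x) (g y). Proof. by rewrite f_adj !gK. Qed.

Lemma loopless_iso : loopless e -> loopless e'.
Proof. by move=> loop x; rewrite g_adj. Qed.

Lemma quadrangle_free_iso : quadrangle_free e -> quadrangle_free e'.
Proof.
have g_inj : injective g := can_inj gK.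
move=> quad u w p q uw pq; rewrite !g_adj.
by apply: quad; rewrite inj_eq.
Qed.

Lemma regular_iso k : regular e k -> regular e' k.
Proof.
move=> reg x; rewrite -(reg (g x)) -(card_imset _ (can_inj fK)).
apply: eq_card => y; rewrite inE; apply/idP/imsetP => [exy | [z]].
- by exists (g y); rewrite ?inE -?g_adj ?gK.
- by rewrite inE => ez ->; rewrite g_adj fK.
Qed.

Lemma bipartite_iso : bipartite e' -> bipartite e.
Proof. by case=> c col; exists (c \o f) => u v; rewrite f_adj; apply: col. Qed.

End Isomorphism.

Section KneserGraph.
Variables (X : finType) (k : nat).
Local Notation kset := {A : {set X} | #|A| == k}.

Definition kneser_adj : rel kset := fun u v => [disjoint val u & val v].

Lemma card_kset (u : kset) : #|val u| = k.
Proof. exact/eqP/(valP u). Qed.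

Lemma kset_act_subproof (s : {perm X}) (u : kset) : #|s @: val u| == k.
Proof. by rewrite card_imset ?card_kset //; apply: perm_inj. Qed.

Definition kset_act_fun (s : {perm X}) (u : kset) : kset :=
  Sub (s @: val u) (kset_act_subproof s u).

Lemma kset_act_fun_inj s : injective (kset_act_fun s).
Proof. by move=> u v /(congr1 val) /(imset_inj (@perm_inj _ s)) /val_inj. Qed.

Definition kset_act (s : {perm X}) : {perm kset} := perm (@kset_act_fun_inj s).

Lemma kset_actE s u : val (kset_act s u) = s @: val u.
Proof. by rewrite permE. Qed.

Lemma kneser_aut s : is_graph_aut kneser_adj (kset_act s).
Proof. by move=> u v; rewrite /kneser_adj !kset_actE imset_disjoint //; apply: perm_inj. Qed.

Lemma kneser_loopless : 0 < k -> loopless kneser_adj.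
Proof.
by move=> k_gt0 u; rewrite /kneser_adj -setI_eq0 setIid -cards_eq0 card_kset -lt0n.
Qed.

Lemma kneser_regular : regular kneser_adj 'C(#|X| - k, k).
Proof.
move=> u; have -> : #|X| - k = #|~: val u| by rewrite [#|~: _|]cardsCs setCK card_kset.
rewrite -cards_draws -(card_imset _ val_inj); apply: eq_card => B; rewrite !inE.
apply/imsetP/andP => [[w] | [sBu kB]].
- by rewrite inE /kneser_adj disjoint_sym disjoints_subset => ? ->; rewrite card_kset.
- by exists (Sub B kB); rewrite // inE /kneser_adj disjoint_sym disjoints_subset.
Qed.

Lemma kneser_quadrangle_free : #|X| <= k.*2.+1 -> quadrangle_free kneser_adj.
Proof.
move=> small u w p q uw pq; rewrite /kneser_adj => pu pw qu qw.
set U := val u :|: val w.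
have k_lt_U : k < #|U|.
  rewrite ltnNge; apply: contra uw => le_U_k.
  have fills (r : kset) : val r \subset U -> val r = U.
    by move=> sub; apply/eqP; rewrite eqEcard sub card_kset.
  by apply/eqP/val_inj; rewrite (fills u (subsetUl _ _)) (fills w (subsetUr _ _)).
have common_nbr (r : kset) : [disjoint val r & val u] -> [disjoint val r & val w] -> val r = ~: U.
  move=> ru rw; apply/eqP; rewrite eqEcard setCU subsetI -!disjoints_subset ru rw.
  rewrite -setCU card_kset [#|~: U|]cardsCs setCK leq_subLR (leq_trans small) //.
  by rewrite -addnn -addSn leq_add2r.
by move: pq; rewrite (val_inj (etrans (common_nbr _ pu pw) (esym (common_nbr _ qu qw)))) eqxx.
Qed.

End KneserGraph.

Section AffinePairs.
Import GRing.Theory.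
Local Open Scope ring_scope.
Variables (F : finFieldType) (A : pred F).
Hypothesis A_sum_neq0 : {in A &, forall a b, a + b != 0}.

Definition affine (a i x : F) := a * x + i.

Lemma affine_inj a i : a \in A -> injective (affine a i).
Proof.
move=> Aa x y /addIr; apply: mulfI.
by apply: contraTneq (A_sum_neq0 Aa Aa) => ->; rewrite addr0 eqxx.
Qed.

Lemma affine_pair_semiregular a b i j p q : p != q -> a \in A -> b \in A ->
  [set affine a i p; affine a i q] = [set affine b j p; affine b j q] -> a = b /\ i = j.
Proof.
move=> pq Aa Ab eq2; have pq0 : p - q != 0 by rewrite subr_eq0.
have apq : affine a i p != affine a i q by rewrite (inj_eq (@affine_inj a i Aa)).
case: (set2_eq apq eq2) => -[e1 e2].
- have /eqP : (a - b) * (p - q) = 0.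
    have -> : (a - b) * (p - q) = (affine a i p - affine b j p) - (affine a i q - affine b j q).
      by rewrite /affine; ring.
    by rewrite e1 e2 !subrr.
  rewrite mulf_eq0 (negbTE pq0) orbF subr_eq0 => /eqP eq_ab.
  by split=> //; move: e1; rewrite /affine eq_ab => /addrI.
- have /eqP : (a + b) * (p - q) = 0.
    have -> : (a + b) * (p - q) = (affine a i p - affine b j q) - (affine a i q - affine b j p).
      by rewrite /affine; ring.
    by rewrite e1 e2 !subrr.
  by rewrite mulf_eq0 (negbTE pq0) orbF (negbTE (A_sum_neq0 Aa Ab)).
Qed.

End AffinePairs.

Lemma card_pvert : #|{: pvert}| = 10.
Proof.
have -> : 10 = 'C(#|'I_5|, 2) by rewrite card_ord.
by rewrite card_sig -card_draws; apply: eq_card => A; rewrite !inE.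
Qed.

Section Petersen.
Import GRing.Theory.
Local Open Scope ring_scope.

(* petersen_adj is kneser_adj on the 2-subsets of 'I_5, and 'I_5 is convertible
   to the field 'F_5. *)

Definition F5_multipliers : pred 'F_5 := [pred a | (a == 1) || (a == 2)].

Lemma F5_multipliers_sum_neq0 : {in F5_multipliers &, forall a b, a + b != 0}.
Proof. by move=> a b /orP[]/eqP-> /orP[]/eqP->. Qed.

Definition multiplier (b : bool) : 'F_5 := if b then 2 else 1.

Lemma multiplier_in b : multiplier b \in F5_multipliers.
Proof. by case: b. Qed.

Definition petersen_sigma (bi : bool * 'F_5) : {perm pvert} :=
  kset_act 2 (perm (affine_inj (i := bi.2) F5_multipliers_sum_neq0 (multiplier_in bi.1))).

Lemma petersen_uvt : uniformly_vertex_transitive petersen_adj.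
Proof.
apply: (semiregular_auts_uvt (sigma := petersen_sigma)).
- by rewrite card_pvert card_prod card_bool card_ord.
- by move=> bi; apply: kneser_aut.
move=> u [b i] [b' j] /(congr1 val); rewrite !kset_actE.
case/cards2P: (valP u) => p [q [pq ->]]; rewrite !imsetU1 !imset_set1 !permE.
case/(affine_pair_semiregular F5_multipliers_sum_neq0 pq (multiplier_in b) (multiplier_in b')).
by case: b; case: b' => //= _ ->.
Qed.

Lemma pair_subproof (a b : 'F_5) : a != b -> #|[set a; b]| == 2%N.
Proof. by rewrite cards2 => ->. Qed.

Definition pair_vertex (a b : 'F_5) (ab : a != b) : pvert := Sub [set a; b] (pair_subproof ab).

Lemma petersen_not_bipartite : ~ bipartite petersen_adj.
Proof.
apply: (pentagon_not_bipartite
  (v0 := pair_vertex (isT : 0 != 1 :> 'F_5)) (v1 := pair_vertex (isT : 2 != 3 :> 'F_5))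
  (v2 := pair_vertex (isT : 4 != 0 :> 'F_5)) (v3 := pair_vertex (isT : 1 != 2 :> 'F_5))
  (v4 := pair_vertex (isT : 3 != 4 :> 'F_5))).
all: by rewrite /petersen_adj /= disjoint_set2.
Qed.

End Petersen.

Section CayleyGraphs.
Import GroupScope.
Variables (gT : finGroupType) (S : {set gT}).
Local Notation adj := (cayley_adj S).
Local Notation conn := (S :|: S^-1).

Lemma cayley_adjE (a b : gT) : adj a b = (a * b^-1 \in conn).
Proof.
rewrite !inE; apply/existsP/orP => [[s /andP[Ss /orP[]/eqP->]] | [Sab | Sba]].
- by left; rewrite mulgK.
- by right; rewrite invMg invgK mulgK.
- by exists (a * b^-1); rewrite Sab mulgKV eqxx.
- by exists (a * b^-1)^-1; rewrite Sba invMg invgK mulgKV eqxx orbT.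
Qed.

Lemma conn_invg (t : gT) : (t^-1 \in conn) = (t \in conn).
Proof. by rewrite !inE invgK orbC. Qed.

Lemma cayley_adj1 (t : gT) : adj t 1 = (t \in conn).
Proof. by rewrite cayley_adjE invg1 mulg1. Qed.

Lemma cayley_adj1l (t : gT) : adj 1 t = (t \in conn).
Proof. by rewrite cayley_adjE mul1g conn_invg. Qed.

Section OrderTen.
Hypothesis card10 : #|gT| = 10.
Hypothesis loop : loopless adj.
Hypothesis quad : quadrangle_free adj.

Lemma conn_neq1 (t : gT) : t \in conn -> t != 1.
Proof. by apply: contraTneq => ->; rewrite -cayley_adj1 loop. Qed.

Lemma conn_no_square (s t g : gT) : s \in conn -> t \in conn -> s != t -> g != 1 ->
  g * s^-1 \in conn -> g * t^-1 \in conn -> False.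
Proof.
move=> Cs Ct st g1 Cgs Cgt; have one_g : 1 != g by rewrite eq_sym.
apply: (quad one_g st); rewrite ?cayley_adj1 //.
- by rewrite cayley_adjE -conn_invg invMg invgK.
- by rewrite cayley_adjE -conn_invg invMg invgK.
Qed.

Lemma conn_noncommuting (s t : gT) :
  s \in conn -> t \in conn -> s != t -> s * t != 1 -> ~ commute s t.
Proof.
move=> Cs Ct st st1 cst; apply: (conn_no_square Cs Ct st st1).
- by rewrite cst mulgK.
- by rewrite mulgK.
Qed.

Lemma order5_or_cyclic (x : gT) : x ^+ 2 != 1 -> #[x] = 5 \/ <[x]> = [set: gT].
Proof.
move=> x2; have := order_dvdG (in_setT x); rewrite cardsT card10 dvdn_divisors //.
rewrite (_ : divisors 10 = [:: 1; 2; 5; 10]%N) // !inE => /or4P[]/eqP ox.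
- by move/eqP: ox; rewrite order_eq1 => /eqP x1; rewrite x1 expg1n eqxx in x2.
- by move: x2; rewrite -ox expg_order eqxx.
- by left.
- by right; apply/eqP; rewrite eqEcard subsetT cardsT card10 -orderE ox.
Qed.

Lemma order5_cycle_parity (x t g : gT) :
  #[x] = 5 -> t \notin <[x]> -> (t * g \in <[x]>) = (g \notin <[x]>).
Proof.
move=> x5 tH; have idx : #|[set: gT] : <[x]>| = 2.
  apply/eqP; rewrite -(eqn_pmul2l (_ : 0 < 5)) //.
  by rewrite -{1}x5 orderE Lagrange ?subsetT // cardsT card10.
have [gH | gH] := boolP (g \in <[x]>); first by rewrite groupMr // (negbTE tH).
have : t \in <[x]> :* g^-1 by rewrite (rcoset_index2 (subsetT _) idx) !inE ?groupV andbT.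
by rewrite mem_rcoset invgK.
Qed.

Lemma involution_notin_order5 (x t : gT) : #[x] = 5 -> t != 1 -> t^-1 = t -> t \notin <[x]>.
Proof.
move=> x5 t1 tt; apply: contra t1 => tH; rewrite -order_eq1 -dvdn1.
have d2 : #[t] %| 2 by rewrite order_dvdn expgS expg1 -{1}tt mulVg.
have d5 : #[t] %| 5 by rewrite -x5 orderE order_dvdG.
by rewrite (_ : 1%N = gcdn 5 2) // dvdn_gcd d5 d2.
Qed.

Lemma commute_in_cycle (x y z : gT) : y \in <[x]> -> z \in <[x]> -> commute y z.
Proof. by move=> /cycleP[i ->] /cycleP[j ->]; apply: commuteX2. Qed.

Lemma mixed_connection_false (a x : gT) :
  a \in conn -> x \in conn -> a^-1 = a -> x^-1 != x -> False.
Proof.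
move=> Ca Cx ai xi.
have ax : a != x by apply: contra_neq xi => <-.
have ax1 : a * x != 1 by rewrite -eq_invg_mul ai.
have noncomm := conn_noncommuting Ca Cx ax ax1.
have x2 : x ^+ 2 != 1 by rewrite expgS expg1 -eq_invg_mul.
have [x5 | xT] := order5_or_cyclic x2; last first.
  by apply: noncomm; apply: (@commute_in_cycle x); rewrite ?xT ?inE ?cycle_id.
have aH : a \notin <[x]> := involution_notin_order5 x5 (conn_neq1 Ca) ai.
have aa : a * a = 1 by rewrite -{1}ai mulVg.
pose y := x ^ a.
have yH : y \in <[x]> by rewrite /y conjgE ai order5_cycle_parity // groupMl ?cycle_id.
have cxy : commute x y by apply: (@commute_in_cycle x); rewrite ?cycle_id.
have [xy1 | xy1] := eqVneq (x * y) 1.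
- apply: (conn_no_square Ca Cx ax ax1); last by rewrite mulgK.
  have -> : a * x * a^-1 = y by rewrite /y conjgE ai mulgA.
  by rewrite (_ : y = x^-1) ?conn_invg //; apply/eqP; rewrite eq_sym eq_invg_mul xy1.
- have xy_gen : <[x]> :=: <[x * y]>.
    apply: nt_gen_prime; first by rewrite -orderE x5.
    by rewrite !inE xy1 groupM ?cycle_id.
  have cxya : commute (x * y) a.
    by rewrite /commute conjgC conjMg /y -conjgM aa conjg1 cxy.
  apply: noncomm; apply: commute_sym.
  have /cycleP[k ->] : x \in <[x * y]> by rewrite -xy_gen cycle_id.
  by apply: commute_sym; apply: commuteX; apply: commute_sym.
Qed.

Lemma involutive_connection_bipartite (a b : gT) : a \in conn -> b \in conn -> a != b ->
  {in conn, forall t, t^-1 = t} -> bipartite adj.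
Proof.
move=> Ca Cb ab invC.
have ab1 : a * b != 1 by rewrite -eq_invg_mul invC.
have noncomm := conn_noncommuting Ca Cb ab ab1.
have ab2 : (a * b) ^+ 2 != 1.
  apply: contra_not_neq noncomm => /eqP; rewrite expgS expg1 -eq_invg_mul invMg !invC //.
  by move=> /eqP.
have [ab5 | abT] := order5_or_cyclic ab2; last first.
  by case: noncomm; apply: (@commute_in_cycle (a * b)); rewrite abT inE.
exists (fun g => g \in <[a * b]>) => u v; rewrite cayley_adjE => Cuv.
have tH := involution_notin_order5 ab5 (conn_neq1 Cuv) (invC _ Cuv).
by rewrite -{1}(mulgKV v u) order5_cycle_parity //; case: (v \in _).
Qed.

Lemma cayley10_cubic_bipartite : regular adj 3 -> bipartite adj.
Proof.
move=> reg; have conn3 : #|conn| = 3.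
  by rewrite -(reg 1); apply: eq_card => t; rewrite inE cayley_adj1l.
case: (pickP [pred x in conn | x^-1 != x]) => [x /andP[Cx xi] | invC]; last first.
  have [a [b [Ca Cb ab]]] : exists a b, [/\ a \in conn, b \in conn & a != b].
    by apply/card_gt1P; rewrite conn3.
  apply: (involutive_connection_bipartite Ca Cb ab) => t Ct.
  by apply/eqP; move: (invC t); rewrite /= Ct => /negbFE.
have sub_xx : [set x; x^-1] \subset conn by rewrite subUset !sub1set Cx conn_invg.
have /cards1P[a Ra] : #|conn :\: [set x; x^-1]| == 1%N.
  by rewrite cardsD (setIidPr sub_xx) conn3 cards2 [x == _]eq_sym xi.
have : a \in conn :\: [set x; x^-1] by rewrite Ra set11.
rewrite in_setD in_set2 negb_or => /andP[/andP[ax axi] Ca].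
have : a^-1 \in [set a].
  by rewrite -Ra in_setD in_set2 conn_invg Ca !(inv_eq invgK) invgK (negbTE ax) (negbTE axi).
by rewrite inE => /eqP ai; case: (mixed_connection_false Ca Cx ai xi).
Qed.

End OrderTen.

End CayleyGraphs.

Lemma petersen_not_cayley : ~ is_cayley petersen_adj.
Proof.
case=> gT [S [f [[g fK gK] f_adj]]].
have card10 : #|gT| = 10 by rewrite -card_pvert (bij_eq_card (Bijective fK gK)).
have petersen_regular : regular petersen_adj 3 by have := @kneser_regular 'I_5 2; rewrite card_ord.
have loop : loopless (cayley_adj S) by apply: (loopless_iso gK f_adj); apply: kneser_loopless.
have quad : quadrangle_free (cayley_adj S).
  by apply: (quadrangle_free_iso gK f_adj); apply: kneser_quadrangle_free; rewrite card_ord.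
apply/petersen_not_bipartite/(bipartite_iso f_adj).
exact: (cayley10_cubic_bipartite card10 loop quad (regular_iso fK gK f_adj petersen_regular)).
Qed.

Theorem mainTheorem3 :
  uniformly_vertex_transitive petersen_adj /\ ~ is_cayley petersen_adj.
Proof. exact: (conj petersen_uvt petersen_not_cayley). Qed.
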